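(* The Iterated Relaxation Procedure (described in the context) returns a set $M'\in\mathcal I$ such that for every $v\in V$, $$\sum_{e\in\delta_{M'}(v)\setminus L(v)}d_{v,e}\le b_v,$$ where $\delta_{M'}(v)=\delta(v)\cap M'$ and $L(v)$ denotes a set of $\min\{k,|\delta_{M'}(v)|\}$ edges $e\in\delta_{M'}(v)$ with greatest demand $d_{v,e}$.
   Context: Setting: a hypergraph $G=(V,E)$ with every hyperedge having at most $k$ endpoints, capacities $b_v\ge0$, demands $d_{v,e}\ge0$ for each hyperedge $e$ and endpoint $v\in e$, profits $p_e\ge0$, and a matroid $\mathcal M=(E,\mathcal I)$ given by an independence oracle; $\delta(v)$ is the set of hyperedges containing $v$. For $W\subseteq V$, $F\subseteq E$, a matroid $\mathcal M'$ on ground set $F$ with rank function $r_{\mathcal M'}$, and values $b'_v$ ($v\in W$), let $LP[W,F,\mathcal M',b']$ be $\max\{\sum_{e\in F}p_ex_e: \sum_{e\in\delta_F(v)}d_{v,e}x_e\le b'_v\ \forall v\in W,\ x(A)\le r_{\mathcal M'}(A)\ \forall A\subseteq F,\ x\ge0\}$, where $\delta_F(v)=\delta(v)\cap F$ and $x(A)=\sum_{e\in A}x_e$. $\mathcal M'-e$ denotes deletion and $\mathcal M'/e$ contraction. Iterated Relaxation Procedure: start with $W=V$, $F=E$, $\mathcal M'=\mathcal M$, $b'_v=b_v$, $M'=\emptyset$. While $F\neq\emptyset$: compute an optimal extreme point $x^*$ of $LP[W,F,\mathcal M',b']$; if $x^*_e=0$ for some $e\in F$, set $F\leftarrow F-\{e\}$,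 $\mathcal M'\leftarrow\mathcal M'-e$; else if $x^*_e=1$ for some $e\in F$, set $F\leftarrow F-\{e\}$, $\mathcal M'\leftarrow\mathcal M'/e$, $M'\leftarrow M'\cup\{e\}$ and $b'_v\leftarrow b'_v-d_{v,e}$ for each endpoint $v$ of $e$; otherwise remove from $W$ a vertex $v\in W$ minimizing $|\delta_F(v)|-x^*(\delta_F(v))$. Return $M'$. *)

From HB Require Import structures.
From mathcomp Require Import all_boot all_order all_algebra.
Set Implicit Arguments. Unset Strict Implicit. Unset Printing Implicit Defensive.
Import Order.TTheory GRing.Theory Num.Theory.
Local Open Scope ring_scope.

Section IRP.
Variables (R : realFieldType) (V E : finType).
(* hypergraph: inc v e  <=>  v is an endpoint of hyperedge e *)
Variable inc : V -> E -> bool.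
Variables (d : V -> E -> R) (p : E -> R).

Definition is_matroid (indep : {set E} -> bool) : Prop :=
  [/\ indep set0,
      (forall A B : {set E}, A \subset B -> indep B -> indep A) &
      (forall A B : {set E}, indep A -> indep B -> #|A| < #|B| ->
         exists2 x, x \in B :\: A & indep (x |: A))]%N.

Definition rk (indep : {set E} -> bool) (A : {set E}) : nat :=
  \max_(B : {set E} | (B \subset A) && indep B) #|B|.

(* deletion M - e and contraction M / e (contraction of a loop = deletion) *)
Definition mdel (indep : {set E} -> bool) (e : E) : {set E} -> bool :=
  fun A => (e \notin A) && indep A.
Definition mcon (indep : {set E} -> bool) (e : E) : {set E} -> bool :=
  fun A => (e \notin A) && (if indep [set e] then indep (e |: A) else indep A).

Definition deltaF (F : {set E}) (v : V) : {set E} := [set e in F | inc v e].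

(* State of the procedure: W, F, current matroid M' (on ground set F),
   residual capacities b', and the set M' being built. *)
Record state := State {
  sW : {set V};
  sF : {set E};
  sI : {set E} -> bool;
  sb : {ffun V -> R};
  sM : {set E} }.

(* feasibility in LP[W,F,M',b'] ; vectors x in R^F are represented as
   x : E -> R vanishing outside F *)
Definition lp_feasible (s : state) (x : {ffun E -> R}) : Prop :=
  [/\ (forall e, e \notin sF s -> x e = 0),
      (forall e, 0 <= x e),
      (forall v, v \in sW s -> \sum_(e in deltaF (sF s) v) d v e * x e <= sb s v) &
      (forall A : {set E}, A \subset sF s -> \sum_(e in A) x e <= (rk (sI s) A)%:R)].

Definition lp_obj (x : {ffun E -> R}) : R := \sum_(e : E) p e * x e.

Definition lp_extreme (s : state) (x : {ffun E -> R}) : Prop :=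
  lp_feasible s x /\
  forall y z, lp_feasible s y -> lp_feasible s z ->
    (forall e, x e = (y e + z e) / 2) -> y = z.

Definition lp_opt_extreme (s : state) (x : {ffun E -> R}) : Prop :=
  lp_extreme s x /\ forall y, lp_feasible s y -> lp_obj y <= lp_obj x.

Definition slack (F : {set E}) (x : {ffun E -> R}) (v : V) : R :=
  (#|deltaF F v|)%:R - \sum_(e in deltaF F v) x e.

Definition upd_b (b' : {ffun V -> R}) (e : E) : {ffun V -> R} :=
  [ffun u => if inc u e then b' u - d u e else b' u].

Definition step (s s' : state) : Prop :=
  sF s != set0 /\
  exists x, lp_opt_extreme s x /\
  [\/ exists2 e, e \in sF s & x e = 0 /\
         s' = State (sW s) (sF s :\ e) (mdel (sI s) e) (sb s) (sM s),
      (forall e, e \in sF s -> x e != 0) /\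
      exists2 e, e \in sF s & x e = 1 /\
         s' = State (sW s) (sF s :\ e) (mcon (sI s) e) (upd_b (sb s) e) (e |: sM s)
    | (forall e, e \in sF s -> x e != 0 /\ x e != 1) /\
      exists2 v, v \in sW s &
        (forall u, u \in sW s -> slack (sF s) x v <= slack (sF s) x u) /\
         s' = State (sW s :\ v) (sF s) (sI s) (sb s) (sM s)].

Definition init_state (indep : {set E} -> bool) (b : V -> R) : state :=
  State setT setT indep [ffun v => b v] set0.

Inductive reachable (s0 : state) : state -> Prop :=
  | reach0 : reachable s0 s0
  | reachS s s' : reachable s0 s -> step s s' -> reachable s0 s'.

Definition top_demand (k : nat) (M : {set E}) (v : V) (L : {set E}) : Prop :=
  [/\ L \subset deltaF M v,
      #|L| = minn k #|deltaF M v| &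
      (forall e f, e \in L -> f \in deltaF M v :\: L -> d v f <= d v e)].

End IRP.

(* An extreme optimum x of the current LP that has no 0/1 entry is pinned down
   by its tight constraints.  Uncrossing (submodularity of the rank) shows that
   the tight matroid constraints are spanned by a chain of tight sets, which has
   at most x(F) nonempty members.  If every vertex of W had slack
   |delta_F(v)| - x(delta_F(v)) > k, double counting over hyperedges (each of
   which has at most k endpoints) would give fewer than |F| - x(F) tight vertex
   constraints; altogether there would be fewer than |F| tight constraints, so
   x would not be a vertex.  Hence some vertex of W has slack at most k, which
   makes every iteration possible.  Along the way the current matroid is the
   restriction to F of M contracted by the edges already taken, and b' is b
   minus their demands, so taking an edge with x_e = 1 keeps the output
   independent and never overloads a vertex still in W.

   When a vertex v is dropped, the current x certifies the bound that is needed
   at the end: with G = delta_F(v), the demand of the edges already taken plus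
   the fractional demand sum_{e in G} x_e d_{v,e} is at most b_v, while
   sum_{e in G} (1 - x_e) <= k.  Edges of G that are later taken are therefore
   paid for up to a fractional knapsack of total size k, which is dominated by
   the k largest demands. *)

From HB Require Import structures.
From mathcomp Require Import all_boot all_order all_algebra.
From mathcomp Require Import ring lra.
From Stdlib Require Import Classical ClassicalEpsilon FunctionalExtensionality.
Import Order.TTheory GRing.Theory Num.Theory.
Set Implicit Arguments. Unset Strict Implicit. Unset Printing Implicit Defensive.

Section MatroidRank.
Variables (E : finType) (indep : {set E} -> bool).
Hypothesis indep_matroid : is_matroid indep.

Lemma card_le_rk (A B : {set E}) : B \subset A -> indep B -> (#|B| <= rk indep A)%N.
Proof.
move=> BA IB; apply: (@leq_bigmax_cond _ (fun C : {set E} => (C \subset A) && indep C)).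
by rewrite BA.
Qed.

Lemma rk_basis (A : {set E}) :
  exists B : {set E}, [/\ B \subset A, indep B & #|B| = rk indep A].
Proof.
case: indep_matroid => I0 _ _.
have : (0 < #|[pred B : {set E} | (B \subset A) && indep B]|)%N.
  by apply/card_gt0P; exists set0; rewrite inE sub0set I0.
case/(eq_bigmax_cond (fun B : {set E} => #|B|)) => B; rewrite inE => /andP[BA IB] rkA.
by exists B; split; rewrite // /rk rkA.
Qed.

Lemma rk_le_card (A : {set E}) : (rk indep A <= #|A|)%N.
Proof. by have [B [BA _ <-]] := rk_basis A; apply: subset_leq_card. Qed.

Lemma rk_subset (A B : {set E}) : A \subset B -> (rk indep A <= rk indep B)%N.
Proof.
move=> AB; have [C [CA IC <-]] := rk_basis A.
by apply: card_le_rk => //; apply: subset_trans AB.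
Qed.

Lemma rk_loop (e : E) : ~~ indep [set e] -> rk indep [set e] = 0%N.
Proof.
move=> Ne; apply/eqP; rewrite -leqn0; apply/bigmax_leqP => B /andP[].
rewrite subset1 => /orP[/eqP-> Ie|/eqP-> _]; last by rewrite cards0.
by rewrite Ie in Ne.
Qed.

Lemma basis_extend (A J : {set E}) : J \subset A -> indep J ->
  exists B : {set E}, [/\ J \subset B, B \subset A, indep B & #|B| = rk indep A].
Proof.
move=> JA IJ; case: indep_matroid => _ _ exchange.
pose P (B : {set E}) := [&& J \subset B, B \subset A & indep B].
have PJ : P J by rewrite /P subxx JA IJ.
case: (@arg_maxnP _ J P (fun B => #|B|) PJ) => B /and3P[JB BA IB] B_max.
exists B; split=> //; apply/eqP; rewrite eqn_leq card_le_rk //=.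
have [C [CA IC <-]] := rk_basis A.
rewrite leqNgt; apply/negP => /(exchange _ _ IB IC) [x].
rewrite inE => /andP[xB xC] IxB.
have /B_max : P (x |: B).
  rewrite /P IxB subUset sub1set (subsetP CA) // BA !andbT.
  exact: subset_trans JB (subsetUr _ _).
by rewrite cardsU1 xB /= ltnn.
Qed.

Lemma rk_submod (A B : {set E}) :
  (rk indep (A :|: B) + rk indep (A :&: B) <= rk indep A + rk indep B)%N.
Proof.
case: indep_matroid => _ indep_sub _.
have [J0 [J0AB IJ0 <-]] := rk_basis (A :&: B).
have J0U : J0 \subset A :|: B.
  by apply: subset_trans J0AB _; apply: subset_trans (subsetIl A B) (subsetUl A B).
have [J [J0J JAB IJ <-]] := basis_extend J0U IJ0.
have JA : (#|J :&: A| <= rk indep A)%N.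
  by apply: card_le_rk; [exact: subsetIr | apply: indep_sub IJ; exact: subsetIl].
have JB : (#|J :&: B| <= rk indep B)%N.
  by apply: card_le_rk; [exact: subsetIr | apply: indep_sub IJ; exact: subsetIl].
have splitJ : (#|J :&: A| + #|J :&: B| = #|J| + #|J :&: A :&: B|)%N.
  rewrite -cardsUI -setIUr (setIidPl JAB).
  by rewrite setIACA setIid setIA.
have J0sub : (#|J0| <= #|J :&: A :&: B|)%N.
  by apply: subset_leq_card; rewrite -setIA subsetI J0J.
apply: leq_trans (leq_add JA JB); rewrite splitJ leq_add2l //.
Qed.

End MatroidRank.

Definition minor (E : finType) (indep : {set E} -> bool) (F M : {set E}) :=
  fun A : {set E} => (A \subset F) && indep (A :|: M).

Lemma minor_matroid (E : finType) (indep : {set E} -> bool) (F M : {set E}) :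
  is_matroid indep -> M :&: F = set0 -> indep M -> is_matroid (minor indep F M).
Proof.
case=> I0 indep_sub exchange MF IM.
have disjM (A : {set E}) : A \subset F -> A :&: M = set0.
  move=> AF; apply/setP => x; rewrite !inE; apply/negP => /andP[xA xM].
  by have := in_set0 x; rewrite -MF inE xM (subsetP AF).
split.
- by rewrite /minor sub0set set0U.
- move=> A B AB /andP[BF IB]; rewrite /minor (subset_trans AB BF).
  by apply: indep_sub IB; apply: setSU.
- move=> A B /andP[AF IA] /andP[BF IB] AltB.
  have : (#|A :|: M| < #|B :|: M|)%N.
    by rewrite !cardsU !disjM // !cards0 !subn0 ltn_add2r.
  case/(exchange _ _ IA IB) => x; rewrite !inE => /andP[/norP[xA xM] /orP[xB|xM']] IxAM.
  + by exists x; rewrite ?inE ?xA // /minor subUset sub1set (subsetP BF) // AF -setUA.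
  + by rewrite xM' in xM.
Qed.

Local Open Scope ring_scope.

Definition propb (P : Prop) : bool :=
  if excluded_middle_informative P then true else false.

Lemma propbP (P : Prop) : reflect P (propb P).
Proof. by rewrite /propb; case: excluded_middle_informative => H; constructor. Qed.

Lemma exists_argmin (R : realDomainType) (I : finType) (P : pred I) (f : I -> R) i0 :
  P i0 -> exists2 i, P i & forall j, P j -> f i <= f j.
Proof. by move=> Pi0; case: (@arg_minP _ _ I i0 P f Pi0) => i; exists i. Qed.

Lemma exists_pos_lower_bound (R : realDomainType) (I : finType) (P : pred I) (f : I -> R) :
  (forall i, P i -> 0 < f i) -> exists2 eps, 0 < eps & forall i, P i -> eps <= f i.
Proof.
move=> f_gt0; case: (pickP P) => [i0 Pi0|noP]; last by exists 1 => // i; rewrite noP.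
by have [i Pi i_min] := exists_argmin f Pi0; exists (f i); [apply: f_gt0|].
Qed.

Section LinearProgram.
Variables (R : realFieldType) (E I : finType) (a : I -> E -> R) (c : I -> R).

Definition dot (u x : E -> R) := \sum_e u e * x e.
Definition feasible (x : E -> R) := forall i, dot (a i) x <= c i.
Definition tight (x : E -> R) i := dot (a i) x == c i.
Definition basic (x : E -> R) := feasible x /\
  forall w : E -> R, (forall i, tight x i -> dot (a i) w = 0) -> forall e, w e = 0.
Definition extreme (x : E -> R) := feasible x /\
  forall y z, feasible y -> feasible z ->
    (forall e, x e = (y e + z e) / 2) -> forall e, y e = z e.

Lemma dotDZ u x w t : dot u (fun e => x e + t * w e) = dot u x + t * dot u w.
Proof. by rewrite /dot mulr_sumr -big_split; apply: eq_bigr => e _ /=; ring. Qed.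

Lemma dotB u x y : dot u (fun e => x e - y e) = dot u x - dot u y.
Proof. by rewrite /dot -sumrB; apply: eq_bigr => e _; ring. Qed.

Lemma dotZ u w t : dot u (fun e => t * w e) = t * dot u w.
Proof. by rewrite /dot mulr_sumr; apply: eq_bigr => e _; ring. Qed.

Lemma basic_extreme x : basic x -> extreme x.
Proof.
case=> Fx Bx; split=> // y z Fy Fz xyz.
have yx e : y e - x e = 0.
  apply: (Bx (fun e => y e - x e)) => i /eqP Ti; rewrite dotB Ti.
  have mid : dot (a i) x = (dot (a i) y + dot (a i) z) / 2.
    by rewrite /dot -big_split mulr_suml; apply: eq_bigr => f _ /=; rewrite xyz; field.
  have := Fy i; have := Fz i; rewrite Ti in mid; lra.
by move=> e; have := xyz e; have := yx e; lra.
Qed.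

Lemma extreme_basic x : extreme x -> basic x.
Proof.
case=> Fx Ex; split=> // w Hw.
have room i : ~~ tight x i -> 0 < (c i - dot (a i) x) / (`|dot (a i) w| + 1).
  move=> Ti; apply: divr_gt0; last by rewrite ltr_wpDl.
  by rewrite subr_gt0 lt_def eq_sym Ti Fx.
have [eps eps_gt0 eps_room] := exists_pos_lower_bound room.
have feas t : `|t| <= eps -> feasible (fun e => x e + t * w e).
  move=> t_eps i; rewrite dotDZ.
  case Ti: (tight x i); first by rewrite Hw // mulr0 addr0 (eqP Ti).
  have := eps_room i; rewrite Ti ler_pdivlMr ?ltr_wpDl // => /(_ isT) bound_i.
  have : t * dot (a i) w <= `|t| * `|dot (a i) w| by rewrite -normrM ler_norm.
  have : `|t| * `|dot (a i) w| <= eps * (`|dot (a i) w| + 1).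
    by apply: ler_pM => //; rewrite ler_wpDr.
  lra.
have mid e : x e = (x e + eps * w e + (x e + - eps * w e)) / 2 by field.
have eps_norm : `|eps| <= eps by rewrite ger0_norm // ltW.
have neps_norm : `|- eps| <= eps by rewrite normrN.
move=> e; have := Ex _ _ (feas _ eps_norm) (feas _ neps_norm) mid e.
move=> Eeps; have : (eps * w e) * 2 = 0 by lra.
by move/eqP; rewrite mulf_eq0 pnatr_eq0 orbF mulf_eq0 (gt_eqF eps_gt0) => /eqP.
Qed.

Section Optimum.
Hypothesis rows_bounded :
  forall w : E -> R, (exists e, w e != 0) -> exists i, 0 < dot (a i) w.
Variable p : E -> R.

Definition loose (x : E -> R) := [set i | ~~ tight x i].

Lemma improve_toward_basic y : feasible y -> ~ basic y ->
  exists y', [/\ feasible y', (#|loose y'| < #|loose y|)%N & dot p y <= dot p y'].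
Proof.
move=> Fy Ny.
have [w [w_tight [e we]]] :
    exists w, (forall i, tight y i -> dot (a i) w = 0) /\ exists e, w e != 0.
  apply: NNPP => Nw; apply: Ny; split=> // w w_tight e; apply: NNPP => we.
  by apply: Nw; exists w; split=> //; exists e; apply/eqP.
pose s : R := if 0 <= dot p w then 1 else -1.
have s_neq0 : s != 0 by rewrite /s; case: ifP; rewrite ?oppr_eq0 oner_eq0.
pose w' e := s * w e.
have w'_tight i : tight y i -> dot (a i) w' = 0 by move=> Ti; rewrite dotZ w_tight ?mulr0.
have pw'_ge0 : 0 <= dot p w'.
  rewrite dotZ /s; case: ifP => [|/negbT]; rewrite ?mul1r //.
  by rewrite mulN1r oppr_ge0 -ltNge => /ltW.
have [i0 Pi0] := rows_bounded (ex_intro _ e (mulf_neq0 s_neq0 we) : exists e, w' e != 0).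
pose P i := 0 < dot (a i) w'.
pose f i := (c i - dot (a i) y) / dot (a i) w'.
have [i1 Pi1 i1_min] := @exists_argmin R I P f i0 Pi0.
pose t := f i1.
have t_ge0 : 0 <= t by rewrite /t /f divr_ge0 ?subr_ge0 ?Fy // ltW.
exists (fun e => y e + t * w' e); split.
- move=> i; rewrite dotDZ; case Pi: (P i).
    have : t * dot (a i) w' <= c i - dot (a i) y by rewrite -ler_pdivlMr // i1_min.
    lra.
  have : t * dot (a i) w' <= 0 by rewrite mulr_ge0_le0 // leNgt -/(P i) Pi.
  have := Fy i; lra.
- apply: proper_card; rewrite properE; apply/andP; split.
    apply/subsetP => i; rewrite !inE; apply: contra => Ti.
    by rewrite /tight dotDZ w'_tight // mulr0 addr0.
  apply/subsetPn; exists i1; rewrite !inE.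
    by apply: contraTN Pi1 => Ti1; rewrite /P w'_tight // ltxx.
  by rewrite negbK /tight dotDZ /t /f; apply/eqP; field; rewrite gt_eqF.
- by rewrite dotDZ lerDl mulr_ge0.
Qed.

Lemma exists_basic_ge y : feasible y -> exists2 x, basic x & dot p y <= dot p x.
Proof.
suff: forall n y, (#|loose y| < n)%N -> feasible y ->
    exists2 x, basic x & dot p y <= dot p x.
  by move/(_ _ y (ltnSn _)).
elim=> // n IHn {}y loose_lt Fy.
case: (classic (basic y)) => By; first by exists y.
have [y' [Fy' lt' le']] := improve_toward_basic Fy By.
have [x Bx le_x] := IHn y' (leq_trans lt' loose_lt) Fy'.
by exists x; last exact: le_trans le_x.
Qed.

Lemma basic_tightE x x' : basic x -> feasible x' -> tight x =1 tight x' -> x = x'.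
Proof.
case=> _ Bx Fx' eq_tight; apply: functional_extensionality => e; apply/eqP.
rewrite -subr_eq0; apply/eqP; apply: (Bx (fun e => x e - x' e)) => i Ti.
by rewrite dotB (eqP Ti); move: Ti; rewrite eq_tight => /eqP->; rewrite subrr.
Qed.

(* A basic solution is determined by its tight rows, so the basic solutions
   strictly better than [x] are counted by a finite set of row patterns. *)
Definition better_patterns x := [set S : {set I} | propb (exists x',
  [/\ basic x', S = [set i | tight x' i] & dot p x < dot p x'])].

Lemma exists_opt_basic y0 : feasible y0 ->
  exists2 x, basic x & forall y, feasible y -> dot p y <= dot p x.
Proof.
move=> Fy0; have [x0 Bx0 _] := exists_basic_ge Fy0.
suff: forall n x, (#|better_patterns x| < n)%N -> basic x ->
    exists2 x, basic x & forall y, feasible y -> dot p y <= dot p x.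
  by move/(_ _ x0 (ltnSn _) Bx0).
elim=> // n IHn x better_lt Bx.
case: (classic (forall y, feasible y -> dot p y <= dot p x)) => x_opt; first by exists x.
have [y Fy lt_y] : exists2 y, feasible y & dot p x < dot p y.
  apply: NNPP => Ny; apply: x_opt => y Fy; rewrite leNgt; apply/negP => lt_y.
  by apply: Ny; exists y.
have [x' Bx' le_x'] := exists_basic_ge Fy.
have lt_x' := lt_le_trans lt_y le_x'.
apply: (IHn x') => //.
suff lt_better : (#|better_patterns x'| < #|better_patterns x|)%N.
  exact: leq_trans lt_better _.
apply: proper_card; rewrite properE; apply/andP; split.
  apply/subsetP => S; rewrite !inE => /propbP [x'' [Bx'' -> lt_x'']]; apply/propbP.
  by exists x''; split=> //; apply: lt_trans lt_x''.
apply/subsetPn; exists [set i | tight x' i]; rewrite !inE; first by apply/propbP; exists x'.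
apply/negP => /propbP [x'' [Bx'' eq_pat lt_x'']].
have eq_x'' : x'' = x'.
  apply: basic_tightE => //; first by case: Bx'.
  by move=> i; have /setP/(_ i) := eq_pat; rewrite !inE.
by move: lt_x''; rewrite eq_x'' ltxx.
Qed.

End Optimum.
End LinearProgram.

Lemma exists_nonzero_kernel (R : fieldType) (E J : finType) (P : {set J}) (q : J -> E -> R) :
  (#|P| < #|E|)%N ->
  exists w : E -> R, (exists e, w e != 0) /\ forall j, j \in P -> \sum_e q j e * w e = 0.
Proof.
move=> P_lt.
pose A : 'M[R]_(#|E|, #|P|) := \matrix_(i, j) q (enum_val j) (enum_val i).
have : kermx A != 0.
  by rewrite -mxrank_eq0 -lt0n mxrank_ker subn_gt0 (leq_ltn_trans (rank_leq_col A)).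
case/matrix0Pn => i [j0 Aij]; exists (fun e => kermx A i (enum_rank e)); split.
  by exists (enum_val j0); rewrite enum_valK.
move=> j Pj; have /matrixP/(_ i (enum_rank_in Pj j)) := mulmx_ker A.
rewrite !mxE => ker_ij; rewrite -[RHS]ker_ij.
rewrite (reindex (@enum_val _ (pred_of_simpl predT))) /=; last first.
  by exists enum_rank => x _; rewrite ?enum_valK ?enum_rankK.
by apply: eq_bigr => i' _; rewrite [A _ _]mxE enum_rankK_in // enum_valK mulrC.
Qed.

Section LPEncoding.
Variables (R : realFieldType) (V E : finType) (inc : V -> E -> bool) (d : V -> E -> R).

(* Rows of LP[W,F,M',b'] as [a_i . x <= c_i]: nonnegativity of each x_e,
   x_e <= 0 for e outside F, the capacity of each vertex, and the rank of each
   set; rows for vertices outside W and sets not inside F are [0 <= 0]. *)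
Definition lp_row := ((E + E) + (V + {set E}))%type.

Definition lp_coef (s : state R V E) (i : lp_row) : E -> R := fun e =>
  match i with
  | inl (inl f) => if e == f then -1 else 0
  | inl (inr f) => if (f \notin sF s) && (e == f) then 1 else 0
  | inr (inl v) => if (v \in sW s) && (e \in deltaF inc (sF s) v) then d v e else 0
  | inr (inr A) => if (A \subset sF s) && (e \in A) then 1 else 0
  end.

Definition lp_rhs (s : state R V E) (i : lp_row) : R :=
  match i with
  | inl _ => 0
  | inr (inl v) => if v \in sW s then sb s v else 0
  | inr (inr A) => if A \subset sF s then (rk (sI s) A)%:R else 0
  end.

Lemma dot_delta (r : R) (f : E) (x : E -> R) :
  dot (fun e => if e == f then r else 0) x = r * x f.
Proof. by rewrite /dot (bigD1 f) //= eqxx big1 ?addr0 // => e /negbTE->; rewrite mul0r. Qed.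

Lemma dot_restrict (A : {set E}) (u x : E -> R) :
  dot (fun e => if e \in A then u e else 0) x = \sum_(e in A) u e * x e.
Proof. by rewrite /dot [RHS]big_mkcond; apply: eq_bigr => e _; case: ifP; rewrite ?mul0r. Qed.

Lemma dot0 (x : E -> R) : dot (fun _ => 0) x = 0.
Proof. by rewrite /dot big1 // => e _; rewrite mul0r. Qed.

Lemma dot_row_nonneg s f x : dot (lp_coef s (inl (inl f))) x = - x f.
Proof. by rewrite dot_delta mulN1r. Qed.

Lemma dot_row_out s f x :
  dot (lp_coef s (inl (inr f))) x = if f \notin sF s then x f else 0.
Proof.
rewrite /lp_coef; case: ifP => _; first by rewrite (dot_delta 1) mul1r.
by rewrite -[RHS](dot0 x).
Qed.

Lemma dot_row_vertex s v x : dot (lp_coef s (inr (inl v))) x =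
  if v \in sW s then \sum_(e in deltaF inc (sF s) v) d v e * x e else 0.
Proof.
rewrite /lp_coef; case: ifP => _; first by rewrite -dot_restrict.
by rewrite -[RHS](dot0 x).
Qed.

Lemma dot_row_rank s A x : dot (lp_coef s (inr (inr A))) x =
  if A \subset sF s then \sum_(e in A) x e else 0.
Proof.
rewrite /lp_coef; case: ifP => _; last by rewrite -[RHS](dot0 x).
by rewrite (dot_restrict A (fun _ => 1)); apply: eq_bigr => e _; rewrite mul1r.
Qed.

Lemma lp_feasibleP s (x : {ffun E -> R}) :
  lp_feasible inc d s x <-> feasible (lp_coef s) (lp_rhs s) x.
Proof.
split.
- case=> out_F x_ge0 cap rank [[e|e]|[v|A]] /=.
  + by rewrite dot_row_nonneg oppr_le0.
  + by rewrite dot_row_out; case: ifP => // /out_F->.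
  + by rewrite dot_row_vertex; case: ifP => // /cap.
  + by rewrite dot_row_rank; case: ifP => // /rank.
- move=> Fx; split.
  + move=> e eF; have := Fx (inl (inr e)); rewrite /= dot_row_out eF.
    have := Fx (inl (inl e)); rewrite /= dot_row_nonneg; lra.
  + by move=> e; have := Fx (inl (inl e)); rewrite /= dot_row_nonneg oppr_le0.
  + by move=> v vW; have := Fx (inr (inl v)); rewrite /= dot_row_vertex vW.
  + by move=> A AF; have := Fx (inr (inr A)); rewrite /= dot_row_rank AF.
Qed.

Lemma lp_feasible_ffunP s (x : E -> R) :
  feasible (lp_coef s) (lp_rhs s) x <-> lp_feasible inc d s [ffun e => x e].
Proof.
rewrite lp_feasibleP; suff -> : [ffun e => x e] = x :> (E -> R) by [].
by apply: functional_extensionality => e; rewrite ffunE.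
Qed.

Lemma lp_rows_bounded (s : state R V E) (w : E -> R) :
  (forall A, (rk (sI s) A <= #|A|)%N) ->
  (exists e, w e != 0) -> exists i, 0 < dot (lp_coef s i) w.
Proof.
move=> rk_card [e we]; case: (ltrgt0P (w e)) => [w_gt0|w_lt0|w0].
- case eF: (e \in sF s).
    by exists (inr (inr [set e])); rewrite dot_row_rank sub1set eF big_set1.
  by exists (inl (inr e)); rewrite dot_row_out eF.
- by exists (inl (inl e)); rewrite dot_row_nonneg oppr_gt0.
- by rewrite w0 eqxx in we.
Qed.

Lemma lp_extreme_basic s (x : {ffun E -> R}) :
  lp_extreme inc d s x -> basic (lp_coef s) (lp_rhs s) x.
Proof.
case=> Fx Ex; apply: extreme_basic; split; first by rewrite -lp_feasibleP.
move=> y z Fy Fz xyz e.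
have := Ex [ffun e => y e] [ffun e => z e]; rewrite -!lp_feasible_ffunP.
by move=> /(_ Fy Fz) /(_ _) /ffunP /(_ e); rewrite !ffunE; apply=> f; rewrite !ffunE.
Qed.

Lemma basic_lp_extreme s (x : E -> R) :
  basic (lp_coef s) (lp_rhs s) x -> lp_extreme inc d s [ffun e => x e].
Proof.
move=> /basic_extreme [Fx Ex]; split; first by rewrite -lp_feasible_ffunP.
move=> y z; rewrite !lp_feasibleP => Fy Fz xyz; apply/ffunP => e.
by apply: (Ex _ _ Fy Fz) => f; rewrite -xyz ffunE.
Qed.

Lemma exists_lp_opt_extreme s p :
  (forall A, (rk (sI s) A <= #|A|)%N) ->
  (forall v, v \in sW s -> 0 <= sb s v) ->
  exists x, lp_opt_extreme inc d p s x.
Proof.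
move=> rk_card b_ge0.
have F0 : feasible (lp_coef s) (lp_rhs s) (fun _ => 0).
  apply/lp_feasible_ffunP; split=> [e _|e|v vW|A AF]; rewrite ?ffunE //.
  - by rewrite big1 ?b_ge0 // => e _; rewrite ffunE mulr0.
  - by rewrite big1 ?ler0n // => e _; rewrite ffunE.
have bounded w := lp_rows_bounded (s := s) (w := w) rk_card.
have [x Bx x_opt] := exists_opt_basic bounded p F0.
exists [ffun e => x e]; split; first exact: basic_lp_extreme.
move=> y /lp_feasibleP /x_opt; rewrite /lp_obj /dot.
by under [X in _ -> _ <= X]eq_bigr do rewrite ffunE.
Qed.

End LPEncoding.

Lemma card_sum_set (T1 T2 : finType) (A : {set T1}) (B : {set T2}) :
  #|[set j : T1 + T2 | match j with inl a => a \in A | inr b => b \in B end]|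
    = (#|A| + #|B|)%N.
Proof.
have -> : [set j : T1 + T2 | match j with inl a => a \in A | inr b => b \in B end]
          = inl @: A :|: inr @: B.
  apply/setP => -[a|b]; rewrite !inE.
  - apply/idP/orP => [aA|[/imsetP[a' a'A [->]]//|/imsetP[]//]].
    by left; apply: imset_f.
  - apply/idP/orP => [bB|[/imsetP[]//|/imsetP[b' b'B [->]]//]].
    by right; apply: imset_f.
rewrite cardsU !card_imset; [|exact: inr_inj|exact: inl_inj].
suff -> : inl @: A :&: inr @: B = set0 by rewrite cards0 subn0.
by apply/setP => j; rewrite !inE; apply/andP => -[/imsetP[a _ ->] /imsetP[]].
Qed.

Lemma sumr_setUI (R : nmodType) (T : finType) (f : T -> R) (A B : {set T}) :
  \sum_(e in A :|: B) f e + \sum_(e in A :&: B) f e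
    = \sum_(e in A) f e + \sum_(e in B) f e.
Proof.
rewrite (big_setID (A := A :|: B) B) (big_setID (A := A) B) /=.
rewrite setDUl setDv setU0 (setIidPr (subsetUr A B)).
set a := \sum_(i in A :&: B) f i; set b := \sum_(i in B) f i.
by rewrite [LHS]addrC [b + _]addrC addrA.
Qed.

Lemma ler_sum_subset (R : numDomainType) (T : finType) (f : T -> R) (A B : {set T}) :
  A \subset B -> (forall e, e \in B -> 0 <= f e) ->
  \sum_(e in A) f e <= \sum_(e in B) f e.
Proof.
move=> AB f_ge0; rewrite (big_setID (A := B) A) (setIidPr AB) /= lerDl.
by apply: sumr_ge0 => e /setDP[eB _]; apply: f_ge0.
Qed.

Section FractionalExtremePoint.
Variables (R : realFieldType) (V E : finType) (inc : V -> E -> bool) (d : V -> E -> R).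
Variables (k : nat) (s : state R V E) (x : {ffun E -> R}).
Hypothesis edge_size : forall e, (#|[set v | inc v e]| <= k)%N.
Hypothesis sI_matroid : is_matroid (sI s).
Hypothesis F_neq0 : sF s != set0.
Hypothesis x_extreme : lp_extreme inc d s x.
Hypothesis x_fractional : forall e, e \in sF s -> x e != 0 /\ x e != 1.

Local Notation F := (sF s).
Local Notation W := (sW s).
Local Notation rkF := (rk (sI s)).

Definition xsum (A : {set E}) := \sum_(e in A) x e.

Lemma x_ge0 e : 0 <= x e.
Proof. by case: x_extreme => -[_ x_ge0 _ _] _. Qed.

Lemma xsum_le_rk (A : {set E}) : A \subset F -> xsum A <= (rkF A)%:R.
Proof. by case: x_extreme => -[_ _ _ x_rk] _; apply: x_rk. Qed.

Lemma x_gt0 e : e \in F -> 0 < x e.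
Proof. by move=> eF; rewrite lt_def x_ge0 andbT; case: (x_fractional eF). Qed.

Lemma x_lt1 e : e \in F -> x e < 1.
Proof.
move=> eF; have := @xsum_le_rk [set e]; rewrite sub1set eF /xsum big_set1 => /(_ isT).
have := rk_le_card sI_matroid [set e]; rewrite cards1 -(ler_nat R) => rk_le1 xe_le.
by rewrite lt_def (le_trans xe_le rk_le1) andbT eq_sym; case: (x_fractional eF).
Qed.

Lemma xsum_gt0 (A : {set E}) : A \subset F -> A != set0 -> 0 < xsum A.
Proof.
move=> AF /set0Pn[e eA]; rewrite /xsum (bigD1 e) //=.
by rewrite ltr_wpDr ?x_gt0 ?(subsetP AF) // sumr_ge0 // => f _; apply: x_ge0.
Qed.

Definition tight_set (A : {set E}) := (A \subset F) && (xsum A == (rkF A)%:R).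

Lemma tight_setUI (A B : {set E}) :
  tight_set A -> tight_set B -> tight_set (A :|: B) /\ tight_set (A :&: B).
Proof.
move=> /andP[AF /eqP xA] /andP[BF /eqP xB].
have UF : A :|: B \subset F by rewrite subUset AF BF.
have IF : A :&: B \subset F by apply: subset_trans (subsetIl _ _) AF.
have := xsum_le_rk UF; have := xsum_le_rk IF; have := sumr_setUI x A B.
have : ((rkF (A :|: B))%:R + (rkF (A :&: B))%:R : R) <= (rkF A)%:R + (rkF B)%:R.
  by rewrite -!natrD ler_nat rk_submod.
rewrite /tight_set UF IF /=; move: xA xB; rewrite /xsum.
by move=> *; split; apply/eqP; lra.
Qed.

Lemma tight_set0 : tight_set set0.
Proof.
have := rk_le_card sI_matroid set0; rewrite cards0 leqn0 => /eqP rk0.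
by rewrite /tight_set sub0set /xsum big_set0 rk0 mulr0n eqxx.
Qed.

Definition tight_chain (C : {set {set E}}) :=
  [forall A in C, tight_set A] &&
  [forall A in C, forall B in C, (A \subset B) || (B \subset A)].

Definition max_chain := [arg max_(C > set0 | tight_chain C) #|C|].

Lemma max_chainP : tight_chain max_chain /\
  forall C, tight_chain C -> (#|C| <= #|max_chain|)%N.
Proof.
rewrite /max_chain; case: arg_maxnP => [|C]; last by split.
by apply/andP; split; apply/forall_inP => A; rewrite inE.
Qed.

Lemma max_chain_tight (A : {set E}) : A \in max_chain -> tight_set A.
Proof. by case: max_chainP => /andP[/forall_inP chain_tight _] _; apply: chain_tight. Qed.

Lemma max_chain_total (A B : {set E}) :
  A \in max_chain -> B \in max_chain -> (A \subset B) || (B \subset A).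
Proof.
case: max_chainP => /andP[_ /forall_inP chain_total] _ HA HB.
by move/forall_inP: (chain_total A HA); apply.
Qed.

Lemma max_chain_insert (S : {set E}) : tight_set S ->
  (forall D, D \in max_chain -> (S \subset D) || (D \subset S)) -> S \in max_chain.
Proof.
move=> TS S_cmp; apply/negPn/negP => S_notin.
have chainS : tight_chain (S |: max_chain).
  apply/andP; split.
    by apply/forall_inP => A; rewrite in_setU1 => /predU1P[->|/max_chain_tight].
  apply/forall_inP => A; rewrite in_setU1 => /predU1P[->|HA];
    apply/forall_inP => B; rewrite in_setU1 => /predU1P[->|HB].
  - by rewrite subxx.
  - exact: S_cmp.
  - by rewrite orbC S_cmp.
  - exact: max_chain_total.
by case: max_chainP => _ /(_ _ chainS); rewrite cardsU1 S_notin /= ltnn.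
Qed.

Lemma set0_in_max_chain : set0 \in max_chain.
Proof. by apply: max_chain_insert tight_set0 _ => D _; rewrite sub0set. Qed.

Definition chain_top := [arg max_(C > set0 in max_chain) #|C|].

Lemma chain_top_in : chain_top \in max_chain.
Proof. by rewrite /chain_top; case: arg_maxnP => //; apply: set0_in_max_chain. Qed.

Lemma sub_chain_top (C : {set E}) : C \in max_chain -> C \subset chain_top.
Proof.
rewrite /chain_top; case: arg_maxnP => [|T T_in T_max C_in]; first exact: set0_in_max_chain.
case/orP: (max_chain_total C_in T_in) => // TC.
by have /eqP-> : T == C by rewrite eqEcard TC; exact: T_max.
Qed.

Lemma tight_sub_chain_top (S : {set E}) : tight_set S -> S \subset chain_top.
Proof.
move=> TS; have [TU _] := tight_setUI TS (max_chain_tight chain_top_in).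
suff /sub_chain_top : S :|: chain_top \in max_chain by rewrite subUset => /andP[].
apply: max_chain_insert => // D /sub_chain_top D_top.
by rewrite (subset_trans D_top (subsetUr _ _)) orbT.
Qed.

Lemma max_chain_between (C C' Q : {set E}) :
  C \in max_chain -> C' \in max_chain -> C' \proper C ->
  (forall D, D \in max_chain -> D \proper C -> (#|D| <= #|C'|)%N) ->
  tight_set Q -> C' \subset Q -> Q \subset C -> Q \in max_chain.
Proof.
move=> C_in C'_in C'C C'_max TQ C'Q QC; apply: max_chain_insert => // D D_in.
case DC': (D \subset C'); first by rewrite (subset_trans DC' C'Q) orbT.
case CD: (C \subset D); first by rewrite (subset_trans QC CD).
have C'D : C' \subset D by move: (max_chain_total C'_in D_in); rewrite DC' orbF.
have DC : D \subset C by move: (max_chain_total C_in D_in); rewrite CD.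
have /C'_max D_le : D \proper C by rewrite properE DC CD.
have /eqP C'_eq_D : C' == D by rewrite eqEcard C'D D_le.
by rewrite -C'_eq_D subxx in DC'.
Qed.

Lemma chain_span (w : E -> R) :
  (forall C, C \in max_chain -> \sum_(e in C) w e = 0) ->
  forall S, tight_set S -> \sum_(e in S) w e = 0.
Proof.
move=> w_chain S TS.
suff sum_SC n (C : {set E}) :
    C \in max_chain -> (#|C| <= n)%N -> \sum_(e in S :&: C) w e = 0.
  by rewrite -(setIidPl (tight_sub_chain_top TS)) (sum_SC _ _ chain_top_in (leqnn _)).
elim: n C => [|n IHn] C C_in C_le.
  by move: C_le; rewrite leqn0 cards_eq0 => /eqP->; rewrite setI0 big_set0.
have [->|C_neq0] := eqVneq C set0; first by rewrite setI0 big_set0.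
pose below := [set D in max_chain | D \proper C].
have set0_below : set0 \in below by rewrite inE set0_in_max_chain proper0.
case: (@arg_maxnP _ set0 (fun D => D \in below) (fun D => #|D|) set0_below) => C'.
rewrite inE => /andP[C'_in C'C] C'_max.
have C'_sub : C' \subset C by case/andP: C'C.
pose Q := (S :&: C) :|: C'.
have Q_in : Q \in max_chain.
  apply: (max_chain_between C_in C'_in C'C).
  - by move=> D D_in DC; apply: C'_max; rewrite inE D_in.
  - have [_ TSC] := tight_setUI TS (max_chain_tight C_in).
    by have [] := tight_setUI TSC (max_chain_tight C'_in).
  - exact: subsetUr.
  - by rewrite subUset subsetIr.
have := sumr_setUI w (S :&: C) C'.
rewrite -/Q (w_chain Q Q_in) (w_chain C' C'_in) add0r addr0 -setIA (setIidPr C'_sub) => <-.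
by apply: IHn => //; rewrite -ltnS (leq_trans (proper_card C'C) C_le).
Qed.

Lemma max_chain_rk_inj : {in max_chain &, injective rkF}.
Proof.
suff sub_eq C D : C \in max_chain -> D \in max_chain -> rkF C = rkF D ->
    C \subset D -> C = D.
  move=> C D C_in D_in rkCD.
  by case/orP: (max_chain_total C_in D_in) => [|/sub_eq ->//]; apply: sub_eq.
move=> C_in D_in rkCD CD; apply/eqP; rewrite eqEsubset CD -setD_eq0 /=.
apply/negPn/negP => DC_neq0.
have /andP[DF /eqP xD] := max_chain_tight D_in.
have /andP[_ /eqP xC] := max_chain_tight C_in.
have := xsum_gt0 (subset_trans (subsetDl D C) DF) DC_neq0.
have : xsum D = xsum C + xsum (D :\: C).
  by rewrite /xsum (big_setID (A := D) C) (setIidPr CD).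
rewrite xD xC rkCD; lra.
Qed.

Lemma card_max_chain_le : (#|max_chain :\ set0|)%:R <= xsum F.
Proof.
pose m := rkF chain_top.
have rk_le C : C \in max_chain -> (rkF C <= m)%N.
  by move=> C_in; apply/(rk_subset sI_matroid)/sub_chain_top.
pose f C := (inord (rkF C) : 'I_m.+1).
have f_inj : {in max_chain :\ set0 &, injective f}.
  move=> C D /setD1P[_ C_in] /setD1P[_ D_in] /(congr1 (@nat_of_ord _)).
  by rewrite /f !inordK ?ltnS ?rk_le //; apply: max_chain_rk_inj.
have f_neq0 : f @: (max_chain :\ set0) \subset [set~ ord0].
  apply/subsetP => _ /imsetP[C /setD1P[C_neq0 C_in] ->]; rewrite !inE.
  apply/eqP => /(congr1 (@nat_of_ord _)); rewrite /f /= inordK ?ltnS ?rk_le // => rk0.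
  have /andP[CF /eqP xC] := max_chain_tight C_in.
  by have := xsum_gt0 CF C_neq0; rewrite xC rk0 ltxx.
have := subset_leq_card f_neq0; rewrite card_in_imset // cardsC1 card_ord /= => card_le.
apply: le_trans (_ : m%:R <= _); first by rewrite ler_nat.
have /andP[topF /eqP <-] := max_chain_tight chain_top_in.
by apply: ler_sum_subset => // e _; apply: x_ge0.
Qed.

Lemma card_sub_xsumE : (#|F|)%:R - xsum F = \sum_(e in F) (1 - x e).
Proof. by rewrite sumrB sumr_const. Qed.

Lemma card_sub_xsum_gt0 : 0 < (#|F|)%:R - xsum F.
Proof.
have [e0 e0F] := set0Pn _ F_neq0; rewrite card_sub_xsumE (bigD1 e0) //=.
rewrite ltr_wpDr ?subr_gt0 ?x_lt1 // sumr_ge0 // => e /andP[eF _].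
by rewrite subr_ge0 ltW ?x_lt1.
Qed.

Lemma slackE v : slack inc F x v = \sum_(e in deltaF inc F v) (1 - x e).
Proof. by rewrite /slack sumrB sumr_const. Qed.

(* double counting: each hyperedge has at most k endpoints *)
Lemma sum_slack_le (T : {set V}) :
  \sum_(v in T) slack inc F x v <= k%:R * ((#|F|)%:R - xsum F).
Proof.
under eq_bigr do rewrite slackE.
rewrite card_sub_xsumE mulr_sumr (exchange_big_dep (mem F)) /=; last first.
  by move=> v e _; rewrite inE => /andP[].
apply: ler_sum => e eF.
have -> : \sum_(v | (v \in T) && (e \in deltaF inc F v)) (1 - x e)
          = (1 - x e) *+ #|[set v in T | inc v e]|.
  by rewrite -sumr_const; apply: eq_bigl => v; rewrite !inE eF.
rewrite -mulr_natl ler_pM2r ?subr_gt0 ?x_lt1 // ler_nat.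
apply: leq_trans (edge_size e); apply: subset_leq_card.
by apply/subsetP => v; rewrite !inE => /andP[].
Qed.

Definition tight_vertices :=
  [set v in W | \sum_(e in deltaF inc F v) d v e * x e == sb s v].

Lemma card_tight_vertices_lt : (forall v, v \in W -> k%:R < slack inc F x v) ->
  (#|tight_vertices|)%:R < (#|F|)%:R - xsum F.
Proof.
move=> slack_gt; have [->|[v0 v0T]] := set_0Vmem tight_vertices.
  by rewrite cards0 card_sub_xsum_gt0.
have T_W v : v \in tight_vertices -> v \in W by rewrite inE => /andP[].
have lt_k : k%:R * (#|tight_vertices|)%:R < k%:R * ((#|F|)%:R - xsum F).
  apply: lt_le_trans (sum_slack_le tight_vertices).
  rewrite mulr_natr -sumr_const; apply: ltr_sum => [|v /T_W]; last exact: slack_gt.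
  by apply/hasP; exists v0; rewrite ?mem_index_enum.
have k_gt0 : 0 < k%:R :> R.
  by rewrite ltr0n lt0n; apply: contraTneq lt_k => ->; rewrite !mul0r ltxx.
by rewrite -(ltr_pM2l k_gt0).
Qed.

Lemma tight_rows_kernel (w : E -> R) :
  (forall e, e \notin F -> w e = 0) ->
  (forall v, v \in tight_vertices -> \sum_(e in deltaF inc F v) d v e * w e = 0) ->
  (forall C, C \in max_chain -> \sum_(e in C) w e = 0) ->
  forall e, w e = 0.
Proof.
move=> w_out w_vertex w_chain.
have [_] := lp_extreme_basic x_extreme; apply=> -[[e|e]|[v|A]]; rewrite /tight.
- rewrite !dot_row_nonneg /= oppr_eq0 => /eqP xe0; rewrite w_out ?oppr0 //.
  by apply: contraT => /negPn /x_gt0; rewrite xe0 ltxx.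
- by rewrite !dot_row_out => _; case: ifP => // /w_out.
- rewrite !dot_row_vertex /=; case: ifP => // vW v_tight.
  by apply: w_vertex; rewrite inE vW v_tight.
- rewrite !dot_row_rank /=; case: ifP => // AF A_tight.
  by apply: chain_span => //; rewrite /tight_set AF A_tight.
Qed.

Lemma exists_small_slack : exists2 v, v \in W & slack inc F x v <= k%:R.
Proof.
apply: NNPP => no_small.
have slack_gt v : v \in W -> k%:R < slack inc F x v.
  by move=> vW; rewrite ltNge; apply/negP => small; apply: no_small; exists v.
pose rows_EV := [set a : E + V |
  match a with inl e => e \in ~: F | inr v => v \in tight_vertices end].
pose rows := [set j : (E + V) + {set E} |
  match j with inl a => a \in rows_EV | inr C => C \in max_chain :\ set0 end].
pose q (j : (E + V) + {set E}) : E -> R :=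
  match j with
  | inl (inl f) => fun e => if e == f then 1 else 0
  | inl (inr v) => fun e => if e \in deltaF inc F v then d v e else 0
  | inr C => fun e => if e \in C then 1 else 0
  end.
have card_rows : (#|rows| < #|E|)%N.
  rewrite !card_sum_set -(cardsC F) [(#|F| + _)%N]addnC -addnA ltn_add2l.
  rewrite -(ltr_nat R) natrD.
  by have := card_max_chain_le; have := card_tight_vertices_lt slack_gt; lra.
have [w [[e we] w_rows]] := exists_nonzero_kernel q card_rows.
suff w0 : forall e, w e = 0 by rewrite w0 eqxx in we.
apply: tight_rows_kernel.
- move=> f fF; have := w_rows (inl (inl f)); rewrite !inE fF => /(_ isT).
  by rewrite -/(dot _ w) (dot_delta 1) mul1r.
- move=> v vT; have := w_rows (inl (inr v)); rewrite 2!inE vT => /(_ isT).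
  by rewrite -/(dot _ w) dot_restrict.
- move=> C C_in; have [->|C_neq0] := eqVneq C set0; first by rewrite big_set0.
  have := w_rows (inr C); rewrite !inE C_neq0 C_in => /(_ isT).
  by rewrite -/(dot _ w) (dot_restrict C (fun _ => 1)); under eq_bigr do rewrite mul1r.
Qed.

End FractionalExtremePoint.

Section TopDemands.
Variables (R : realFieldType) (E : finType) (k : nat) (f : E -> R) (S L : {set E}).
Hypothesis f_ge0 : forall e, e \in S -> 0 <= f e.
Hypothesis LS : L \subset S.
Hypothesis card_L : #|L| = minn k #|S|.
Hypothesis L_top : forall e g, e \in L -> g \in S :\: L -> f g <= f e.

Lemma exists_top_threshold : exists th, [/\ 0 <= th,
  (forall g, g \in S :\: L -> f g <= th), (forall e, e \in L -> th <= f e)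
  & #|L| = k \/ th = 0].
Proof.
have [Sk|kS] := leqP #|S| k.
  have LeS : L = S by apply/eqP; rewrite eqEcard LS card_L (minn_idPr Sk) /=.
  exists 0; split=> [||e|]; rewrite ?LeS //; last by right.
  - by move=> g; rewrite setDv inE.
  - exact: f_ge0.
have card_Lk : #|L| = k by rewrite card_L (minn_idPl (ltnW kS)).
have [L0|[e0 e0L]] := set_0Vmem L.
  have [g0 g0S] : exists g, g \in S by apply/set0Pn; rewrite -card_gt0 (leq_ltn_trans _ kS).
  have [g g_S g_max] := exists_argmin (fun g => - f g) g0S.
  exists (f g); split=> [||e|]; rewrite ?L0 ?inE //; first exact: f_ge0.
  - by move=> h; rewrite setD0 => /g_max; rewrite lerN2.
  - by left; rewrite -L0.
have [e e_L e_min] := exists_argmin f e0L.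
exists (f e); split=> [|g|e'|]; last by left.
- exact/f_ge0/(subsetP LS).
- exact: L_top e_L.
- exact: e_min.
Qed.

Lemma fractional_knapsack_le_top (S' : {set E}) (z : E -> R) :
  S' \subset S -> (forall e, e \in S' -> 0 <= z e <= 1) -> \sum_(e in S') z e <= k%:R ->
  \sum_(e in S') z e * f e <= \sum_(e in L) f e.
Proof.
move=> S'S z01 z_le.
have [th [th_ge0 th_out th_in th_k]] := exists_top_threshold.
have split_th : \sum_(e in S') z e * f e
    = \sum_(e in S') z e * (f e - th) + th * \sum_(e in S') z e.
  by rewrite mulr_sumr -big_split; apply: eq_bigr => e _ /=; ring.
have excess : \sum_(e in S') z e * (f e - th) <= \sum_(e in L) (f e - th).
  apply: le_trans (_ : \sum_(e in S' :&: L) (f e - th) <= _); last first.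
    by apply: ler_sum_subset => [|e /th_in]; rewrite ?subsetIr ?subr_ge0.
  rewrite (big_setID (A := S') L) /= -[X in _ <= X]addr0; apply: lerD.
  - apply: ler_sum => e /setIP[eS' eL]; have /andP[_ z1] := z01 e eS'.
    by rewrite -[X in _ <= X]mul1r ler_wpM2r // subr_ge0 th_in.
  - apply: sumr_le0 => e /setDP[eS' eL]; have /andP[z0 _] := z01 e eS'.
    by rewrite mulr_ge0_le0 // subr_le0 th_out // inE eL (subsetP S'S).
have : th * \sum_(e in S') z e <= th * k%:R by rewrite ler_wpM2l.
rewrite sumrB sumr_const -mulr_natr in excess.
by case: th_k => [card_Lk|th0]; rewrite ?card_Lk ?th0 in excess split_th *; lra.
Qed.

End TopDemands.

Section Procedure.
Variables (R : realFieldType) (V E : finType) (inc : V -> E -> bool) (k : nat)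
  (b : V -> R) (d : V -> E -> R) (p : E -> R) (indep : {set E} -> bool).
Hypothesis edge_size : forall e : E, (#|[set v | inc v e]| <= k)%N.
Hypothesis b_ge0 : forall v, 0 <= b v.
Hypothesis d_ge0 : forall v e, inc v e -> 0 <= d v e.
Hypothesis indep_matroid : is_matroid indep.

(* Witnessed by G = delta_F(v) and y = x for the LP solution x current when v
   leaves W; every edge taken later lies in G. *)
Definition removal_certificate (M F : {set E}) (v : V) :=
  exists (G : {set E}) (y : E -> R),
  [/\ forall e, e \in G -> inc v e /\ 0 <= y e <= 1,
      \sum_(e in G) (1 - y e) <= k%:R,
      deltaF inc F v \subset G &
      \sum_(e in deltaF inc M v :\: G) d v e + \sum_(e in G) y e * d v e <= b v].

Record invariant (s : state R V E) : Prop := {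
  inv_disjoint : sM s :&: sF s = set0;
  inv_indep : indep (sM s);
  inv_minor : sI s =1 minor indep (sF s) (sM s);
  inv_residual : forall v, sb s v = b v - \sum_(e in deltaF inc (sM s) v) d v e;
  inv_residual_ge0 : forall v, v \in sW s -> 0 <= sb s v;
  inv_removed : forall v, v \notin sW s -> removal_certificate (sM s) (sF s) v }.

Lemma deltaF_subset (F F' : {set E}) (v : V) :
  F \subset F' -> deltaF inc F v \subset deltaF inc F' v.
Proof. by move=> FF'; apply/subsetP => e; rewrite !inE => /andP[/(subsetP FF') -> ->]. Qed.

Lemma removal_certificate_subset (M F F' : {set E}) v :
  F' \subset F -> removal_certificate M F v -> removal_certificate M F' v.
Proof.
move=> F'F [G [y [G_inc y_sum FG bound]]]; exists G, y; split=> //.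
exact: subset_trans (deltaF_subset v F'F) FG.
Qed.

Lemma removal_certificate_take (M F : {set E}) v e :
  e \in F -> removal_certificate M F v -> removal_certificate (e |: M) (F :\ e) v.
Proof.
move=> eF [G [y [G_inc y_sum FG bound]]]; exists G, y; split=> //.
  exact: subset_trans (deltaF_subset v (subsetDl F [set e])) FG.
suff -> : deltaF inc (e |: M) v :\: G = deltaF inc M v :\: G by [].
apply/setP => f; rewrite !inE; case: (eqVneq f e) => [->|] //=.
case ve: (inc v e); last by rewrite !andbF.
by rewrite (subsetP FG) // inE eF ve.
Qed.

Lemma invariant_matroid s : invariant s -> is_matroid (sI s).
Proof.
move=> Is; have -> : sI s = minor indep (sF s) (sM s).
  exact/functional_extensionality/(inv_minor Is).
exact: minor_matroid (inv_disjoint Is) (inv_indep Is).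
Qed.

Lemma invariant_init : invariant (init_state indep b).
Proof.
split=> //= [||A|v|v _|v]; rewrite ?ffunE.
- by rewrite set0I.
- by case: indep_matroid.
- by rewrite /minor subsetT setU0.
- by rewrite big1 ?subr0 // => e; rewrite inE in_set0.
- exact: b_ge0.
- by rewrite inE.
Qed.

Lemma taken_notin_F s e : invariant s -> e \in sM s -> e \notin sF s.
Proof.
move=> Is eM; apply/negP => eF; suff : e \in set0 by rewrite inE.
by rewrite -(inv_disjoint Is) inE eM eF.
Qed.

Lemma lp_feasible_le1 s x e :
  invariant s -> lp_feasible inc d s x -> e \in sF s -> x e <= 1.
Proof.
move=> Is [_ _ _ x_rk] eF; have := x_rk [set e]; rewrite sub1set eF big_set1 => /(_ isT).
move/le_trans; apply; rewrite lern1.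
by have := rk_le_card (invariant_matroid Is) [set e]; rewrite cards1.
Qed.

Lemma invariant_delete s e : invariant s ->
  invariant (State (sW s) (sF s :\ e) (mdel (sI s) e) (sb s) (sM s)).
Proof.
move=> Is; split=> /=.
- by rewrite setIDA (inv_disjoint Is) set0D.
- exact: inv_indep Is.
- by move=> A; rewrite /mdel (inv_minor Is) /minor subsetD1 andbA [(_ \notin _) && _]andbC.
- exact: inv_residual Is.
- exact: inv_residual_ge0 Is.
- by move=> v /(inv_removed Is); apply: removal_certificate_subset; apply: subsetDl.
Qed.

Lemma invariant_contract s x e : invariant s -> lp_feasible inc d s x ->
  e \in sF s -> x e = 1 ->
  invariant (State (sW s) (sF s :\ e) (mcon (sI s) e) (upd_b inc d (sb s) e) (e |: sM s)).
Proof.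
move=> Is Fx eF xe1; have [_ x_ge0 cap x_rk] := Fx.
have eM : e \notin sM s by apply/negP => /(taken_notin_F Is); rewrite eF.
have Ie : sI s [set e].
  apply/negPn/negP => /rk_loop rk0.
  by have := x_rk [set e]; rewrite sub1set eF big_set1 xe1 rk0 ler10 => /(_ isT).
have deltaU u : deltaF inc (e |: sM s) u =
    if inc u e then e |: deltaF inc (sM s) u else deltaF inc (sM s) u.
  apply/setP => f; case: ifP => ue; rewrite !inE; case: (eqVneq f e) => [->|] //=.
  by rewrite ue andbF.
split=> /=.
- apply/setP => f; rewrite !inE; case: (eqVneq f e) => //= _.
  by case fM: (f \in sM s) => //=; apply/negbTE/(taken_notin_F Is fM).
- by move: Ie; rewrite (inv_minor Is) => /andP[].
- move=> A; rewrite /mcon Ie (inv_minor Is) /minor subsetD1 subUset sub1set eF.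
  by rewrite -setUA setUCA; case: (e \in A); case: (A \subset sF s).
- move=> u; rewrite ffunE (inv_residual Is) deltaU; case: ifP => // _.
  by rewrite big_setU1 ?inE ?(negbTE eM) //=; ring.
- move=> u uW; rewrite ffunE; case: ifP => ue; last exact: inv_residual_ge0 Is u uW.
  rewrite subr_ge0; apply: le_trans (cap u uW); rewrite (bigD1 e) ?inE ?eF //= xe1 mulr1.
  rewrite lerDl sumr_ge0 // => f /andP[]; rewrite inE => /andP[_ uf] _.
  by rewrite mulr_ge0 ?d_ge0.
- by move=> v /(inv_removed Is); apply: removal_certificate_take.
Qed.

Lemma invariant_remove_vertex s x v0 : invariant s -> lp_feasible inc d s x ->
  v0 \in sW s -> slack inc (sF s) x v0 <= k%:R ->
  invariant (State (sW s :\ v0) (sF s) (sI s) (sb s) (sM s)).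
Proof.
move=> Is Fx v0W v0_small; have [_ x_ge0 cap _] := Fx.
split=> /=.
- exact: inv_disjoint Is.
- exact: inv_indep Is.
- exact: inv_minor Is.
- exact: inv_residual Is.
- by move=> v /setD1P[_ /(inv_residual_ge0 Is)].
- move=> v; rewrite in_setD1 negb_and negbK => /orP[/eqP-> | /(inv_removed Is)//].
  exists (deltaF inc (sF s) v0), x; split=> //.
  + by move=> e; rewrite inE => /andP[eF ->]; rewrite x_ge0 (lp_feasible_le1 Is Fx eF).
  + by rewrite -slackE.
  + have -> : deltaF inc (sM s) v0 :\: deltaF inc (sF s) v0 = deltaF inc (sM s) v0.
      apply/setP => f; rewrite !inE; case fM: (f \in sM s); rewrite ?andbF //=.
      by rewrite (negbTE (taken_notin_F Is fM)).
    have := cap v0 v0W; rewrite (inv_residual Is).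
    under [X in _ + X <= _]eq_bigr do rewrite mulrC.
    lra.
Qed.

Lemma invariant_step s s' : invariant s -> step inc d p s s' -> invariant s'.
Proof.
move=> Is [F_neq0 [x [[x_ext _]
  [[e eF [_ ->]]|[_ [e eF [xe1 ->]]]|[x_frac [v0 v0W [v0_min ->]]]]]]].
- exact: invariant_delete.
- exact: invariant_contract (proj1 x_ext) eF xe1.
- have [u uW u_small] :=
    exists_small_slack edge_size (invariant_matroid Is) F_neq0 x_ext x_frac.
  exact: invariant_remove_vertex (proj1 x_ext) v0W (le_trans (v0_min u uW) u_small).
Qed.

Lemma invariant_reachable s : reachable inc d p (init_state indep b) s -> invariant s.
Proof. by elim=> [|s1 s2 _ Is1 /(invariant_step Is1)]; first exact: invariant_init. Qed.

Lemma step_exists s : invariant s -> sF s != set0 -> exists s', step inc d p s s'.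
Proof.
move=> Is F_neq0.
have [x [x_ext x_opt]] := exists_lp_opt_extreme inc d p (rk_le_card (invariant_matroid Is))
  (inv_residual_ge0 Is).
have opt : lp_opt_extreme inc d p s x by [].
case: (boolP [exists e in sF s, x e == 0]) => [/exists_inP[e eF /eqP xe0]|no0].
  exists (State (sW s) (sF s :\ e) (mdel (sI s) e) (sb s) (sM s)); split=> //.
  by exists x; split=> //; apply: Or31; exists e.
have x_neq0 e : e \in sF s -> x e != 0.
  by move=> eF; apply: contraNneq no0 => xe0; apply/exists_inP; exists e; rewrite ?xe0.
case: (boolP [exists e in sF s, x e == 1]) => [/exists_inP[e eF /eqP xe1]|no1].
  exists (State (sW s) (sF s :\ e) (mcon (sI s) e) (upd_b inc d (sb s) e) (e |: sM s)).
  by split=> //; exists x; split=> //; apply: Or32; split=> //; exists e.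
have x_frac e : e \in sF s -> x e != 0 /\ x e != 1.
  move=> eF; split; first exact: x_neq0.
  by apply: contraNneq no1 => xe1; apply/exists_inP; exists e; rewrite ?xe1.
have [u uW _] := exists_small_slack edge_size (invariant_matroid Is) F_neq0 x_ext x_frac.
have [v0 v0W v0_min] := exists_argmin (slack inc (sF s) x) uW.
exists (State (sW s :\ v0) (sF s) (sI s) (sb s) (sM s)); split=> //.
by exists x; split=> //; apply: Or33; split=> //; exists v0.
Qed.

Lemma invariant_degree_bound s v L : invariant s -> top_demand inc d k (sM s) v L ->
  \sum_(e in deltaF inc (sM s) v :\: L) d v e <= b v.
Proof.
move=> Is [LS card_L L_top]; set S := deltaF inc (sM s) v.
have d_S e : e \in S -> 0 <= d v e by rewrite inE => /andP[_ /d_ge0].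
have -> : \sum_(e in S :\: L) d v e = \sum_(e in S) d v e - \sum_(e in L) d v e.
  by rewrite (big_setID (A := S) L) /= (setIidPr LS) addrC addrK.
have dL_ge0 : 0 <= \sum_(e in L) d v e by apply: sumr_ge0 => e /(subsetP LS)/d_S.
case: (boolP (v \in sW s)) => [vW|/(inv_removed Is)[G [y [G_inc y_sum _ bound]]]].
  by have := inv_residual_ge0 Is vW; rewrite (inv_residual Is) -/S; lra.
have y_le : \sum_(e in S :&: G) y e * d v e <= \sum_(e in G) y e * d v e.
  apply: ler_sum_subset; first exact: subsetIr.
  by move=> e /G_inc[ve /andP[y0 _]]; rewrite mulr_ge0 ?d_ge0.
have knapsack : \sum_(e in S :&: G) (1 - y e) * d v e <= \sum_(e in L) d v e.
  apply: (fractional_knapsack_le_top d_S LS card_L L_top (subsetIl S G)).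
  - by move=> e /setIP[_ /G_inc[_ /andP[y0 y1]]]; rewrite subr_ge0 y1 lerBlDr lerDl y0.
  - apply: le_trans y_sum; apply: ler_sum_subset; first exact: subsetIr.
    by move=> e /G_inc[_ /andP[_ y1]]; rewrite subr_ge0.
rewrite (big_setID (A := S) G) /=.
have : \sum_(e in S :&: G) (1 - y e) * d v e
       = \sum_(e in S :&: G) d v e - \sum_(e in S :&: G) y e * d v e.
  by rewrite -sumrB; apply: eq_bigr => e _; ring.
lra.
Qed.

End Procedure.

Unset Implicit Arguments.

Theorem lemma3 (R : realFieldType) (V E : finType) (inc : V -> E -> bool)
    (k : nat) (b : V -> R) (d : V -> E -> R) (p : E -> R)
    (indep : {set E} -> bool) :
  (forall e : E, #|[set v | inc v e]| <= k)%N ->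
  (forall v, 0 <= b v) ->
  (forall v e, inc v e -> 0 <= d v e) ->
  (forall e, 0 <= p e) ->
  is_matroid indep ->
  (* the procedure never gets stuck (each iteration removes an edge or a vertex,
     so it terminates) *)
  (forall s, reachable inc d p (init_state indep b) s -> sF s != set0 ->
     exists s', step inc d p s s') /\
  (* and every output M' is independent and satisfies the degree bounds *)
  (forall s, reachable inc d p (init_state indep b) s -> sF s = set0 ->
     indep (sM s) /\
     forall (v : V) (L : {set E}), top_demand inc d k (sM s) v L ->
       \sum_(e in deltaF inc (sM s) v :\: L) d v e <= b v).
Proof.
move=> edge_size b_ge0 d_ge0 _ indep_matroid.
have reach_inv :=
  @invariant_reachable _ _ _ inc k b d p indep edge_size b_ge0 d_ge0 indep_matroid.
split=> [s /reach_inv Is|s /reach_inv Is _].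
  exact: (step_exists p edge_size indep_matroid Is).
split=> [|v L]; first exact: (inv_indep Is).
exact: (invariant_degree_bound d_ge0 Is).
Qed.
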